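(* Let $G$ be a simple signed digraph without vertices of in-degree $0$ or $2$. Then at least one Boolean network on $G$ is not synchronizing.
   Context: A signed digraph on $V$ is $(V,E)$ with $E\subseteq V\times V\times\{-1,1\}$ (arc from $j$ to $i$ of sign $s$; loops allowed); it is simple if it never has both a positive and a negative arc from one vertex to another. In-degree counts in-neighbors. A Boolean network (BN) is $f:\{0,1\}^V\to\{0,1\}^V$; its signed interaction digraph has a positive (negative) arc from $j$ to $i$ iff for some $x$ with $x_j=0$, $f_i(x+e_j)-f_i(x)$ is positive (negative). A BN on $G$ is one whose signed interaction digraph is $G$. $f^i(x)$ is $x$ with $x_i$ replaced by $f_i(x)$; $f^{i_1\cdots i_\ell}=f^{i_\ell}\circ\cdots\circ f^{i_1}$; $f$ is synchronizing if $f^w$ is a constant map for some word $w$ over $V$. *)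

From mathcomp Require Import all_boot.
Set Implicit Arguments. Unset Strict Implicit. Unset Printing Implicit Defensive.

(* A sign in {-1,1} is encoded as a bool:
   true = +1 (positive), false = -1 (negative).
   A signed digraph is its arc set E : {set V * V * bool}; the triple
   (j, i, s) is an arc from j to i of sign s (loops allowed). *)
Definition sdigraph (V : finType) := {set V * V * bool}.

Definition simple_sd (V : finType) (E : sdigraph V) : Prop :=
  forall j i : V, ~ ((j, i, true) \in E /\ (j, i, false) \in E).

Definition indeg (V : finType) (E : sdigraph V) (i : V) : nat :=
  #|[set j : V | [exists s : bool, (j, i, s) \in E]]|.

Definition config (V : finType) := {ffun V -> bool}.
Definition BN (V : finType) := config V -> config V.

Definition setc (V : finType) (x : config V) (j : V) (b : bool) : config V :=
  [ffun k => if k == j then b else x k].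

Definition interaction_arc (V : finType) (f : BN V) (j i : V) (s : bool) : Prop :=
  exists x : config V, x j = false /\
    if s then f x i = false /\ f (setc x j true) i = true
    else f x i = true /\ f (setc x j true) i = false.

Definition BN_on (V : finType) (E : sdigraph V) (f : BN V) : Prop :=
  forall (j i : V) (s : bool), (j, i, s) \in E <-> interaction_arc f j i s.

Definition upd (V : finType) (f : BN V) (i : V) (x : config V) : config V :=
  setc x i (f x i).

Definition upd_word (V : finType) (f : BN V) (w : seq V) (x : config V) : config V :=
  foldl (fun y i => upd f i y) x w.

Definition synchronizing (V : finType) (f : BN V) : Prop :=
  exists (w : seq V) (c : config V), forall x : config V, upd_word f w x = c.

From mathcomp Require Import all_boot.
From mathcomp Require Import zify.
Set Implicit Arguments. Unset Strict Implicit. Unset Printing Implicit Defensive.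

(* The Boolean network chosen at vertex i reads each in-neighbour j as the
   literal x_j or ~x_j according to the sign of the arc, and combines these
   literals by a monotone self-dual function in which every input is
   essential; such a function exists on any nonempty set of size other than
   2.  Monotonicity in the literals makes the interaction digraph exactly G,
   and self-duality makes every update f^i commute with the global negation
   x |-> ~x.  Hence f^w(~x) = ~f^w(x), so f^w is never constant. *)

Section Gate.

Variable V : finType.
Implicit Types (A : {set V}) (l : V -> bool).

Definition gate A l : bool :=
  if [pick j in A] is Some j0 then
    if #|A| == 1 then l j0
    else if l j0 then [exists j in A :\ j0, l j] else [forall j in A :\ j0, l j]
  else false.

Lemma eq_gate A l l' : {in A, l =1 l'} -> gate A l = gate A l'.
Proof.
move=> eq_l; rewrite /gate; case: pickP => // j0 Aj0.
rewrite eq_l //; case: ifP => // _; case: (l' j0).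
- by apply: eq_existsb => j; apply: andb_id2l => /setD1P[_ /eq_l].
- by apply: eq_forallb => j; apply: implyb_id2l => /setD1P[_ /eq_l].
Qed.

Lemma exists_in_setD1 A j0 : j0 \in A -> #|A| != 1 -> exists j, j \in A :\ j0.
Proof. by move=> Aj0 A_neq1; apply/card_gt0P; move: A_neq1; rewrite (cardsD1 j0) Aj0; lia. Qed.

Lemma gate_mono A l l' :
  (forall k, k \in A -> l k -> l' k) -> gate A l -> gate A l'.
Proof.
move=> le_l; rewrite /gate; case: pickP => // j0 Aj0.
case: ifP => [_|A_neq1]; first exact: le_l.
case lj0: (l j0); case l'j0: (l' j0).
- case/existsP=> j /andP[Aj lj]; apply/existsP; exists j.
  by rewrite Aj (le_l j) //; case/setD1P: Aj.
- by have := le_l j0 Aj0 lj0; rewrite l'j0.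
- move=> /forallP all_l; have [j Aj] := exists_in_setD1 Aj0 (negbT A_neq1).
  apply/existsP; exists j; rewrite Aj (le_l j) //; last exact: (implyP (all_l j)).
  by case/setD1P: Aj.
- move=> /forallP all_l; apply/forallP => j; apply/implyP => Aj.
  by apply: (le_l j); [case/setD1P: Aj | exact: (implyP (all_l j))].
Qed.

Lemma gateN A l : 0 < #|A| -> gate A (fun k => ~~ l k) = ~~ gate A l.
Proof.
case/card_gt0P=> j Aj; rewrite /gate; case: pickP => [j0 _|]; last by move/(_ j); rewrite Aj.
case: ifP => // _; case: (l j0) => /=.
- by rewrite negb_exists; apply: eq_forallb => k; case: (k \in _).
- by rewrite negb_forall; apply: eq_existsb => k; case: (k \in _).
Qed.

(* On a pair the pivot is ignored: no monotone self-dual function of two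
   variables depends on both. *)
Lemma gate_essential A j :
  j \in A -> #|A| != 2 ->
  exists l, forall b, gate A (fun k => if k == j then b else l k) = b.
Proof.
move=> Aj A_neq2; rewrite /gate; case: pickP => [j0 Aj0|]; last by move/(_ j); rewrite Aj.
have [/eqP/cards1P[a defA]|A_neq1] := eqVneq #|A| 1.
  by move: Aj Aj0; rewrite defA !inE => /eqP-> /eqP->; exists xpred0 => b; rewrite eqxx.
case: (eqVneq j0 j) Aj0 => [-> _|j0_neq_j _].
  have [j1 Aj1] := exists_in_setD1 Aj A_neq1.
  have [j2 Aj2] : exists j2, j2 \in A :\ j :\ j1.
    apply/card_gt0P; move: A_neq1 A_neq2.
    by rewrite (cardsD1 j A) Aj (cardsD1 j1 (A :\ j)) Aj1; lia.
  move: Aj2; rewrite !in_setD1 => /and3P[j2_neq_j1 j2_neq_j Aj2].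
  case/setD1P: Aj1 => j1_neq_j Aj1.
  exists (pred1 j1) => -[].
    by apply/existsP; exists j1; rewrite in_setD1 j1_neq_j Aj1 (negbTE j1_neq_j) /= eqxx.
  apply/negbTE/forallP => /(_ j2).
  by rewrite in_setD1 j2_neq_j Aj2 (negbTE j2_neq_j) /= (negbTE j2_neq_j1).
exists (pred1 j0) => -[] /=; rewrite eqxx.
  by apply/existsP; exists j; rewrite in_setD1 eq_sym j0_neq_j Aj eqxx.
apply/negbTE/existsP => -[k /andP[/setD1P[k_neq_j0 _]]].
by case: eqP => // _; rewrite /= (negbTE k_neq_j0).
Qed.

End Gate.

Section SelfDual.

Variable V : finType.
Implicit Types (f : BN V) (x : config V).

Definition negc x : config V := [ffun k => ~~ x k].

Lemma upd_negc f i x :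
  (forall y, f (negc y) = negc (f y)) -> upd f i (negc x) = negc (upd f i x).
Proof.
move=> f_selfdual; apply/ffunP => k.
by rewrite /upd /setc f_selfdual !ffunE; case: (k == i).
Qed.

Lemma upd_word_negc f w x :
  (forall y, f (negc y) = negc (f y)) -> upd_word f w (negc x) = negc (upd_word f w x).
Proof. by move=> f_selfdual; elim: w x => //= i w IHw x; rewrite -IHw upd_negc. Qed.

Lemma selfdual_not_synchronizing f :
  0 < #|V| -> (forall y, f (negc y) = negc (f y)) -> ~ synchronizing f.
Proof.
case/card_gt0P=> v _ f_selfdual [w [c fw_c]].
have := upd_word_negc w c f_selfdual; rewrite !fw_c => /ffunP/(_ v).
by rewrite ffunE; case: (c v).
Qed.

End SelfDual.

Section GateNetwork.

Variables (V : finType) (E : sdigraph V).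
Implicit Types (i j k : V) (x : config V).

Definition in_nbs i : {set V} := [set j | [exists s, (j, i, s) \in E]].

Definition sign_lit i x j : bool := if (j, i, true) \in E then x j else ~~ x j.

Definition gate_net : BN V := fun x => [ffun i => gate (in_nbs i) (sign_lit i x)].

Lemma gate_net_selfdual x :
  (forall i, 0 < #|in_nbs i|) -> gate_net (negc x) = negc (gate_net x).
Proof.
move=> nbs_gt0; apply/ffunP => i; rewrite !ffunE -gateN //.
by apply: eq_gate => j _; rewrite /sign_lit ffunE; case: ifP.
Qed.

Lemma gate_net_setc_out x i j b :
  j \notin in_nbs i -> gate_net (setc x j b) i = gate_net x i.
Proof.
move=> j_out; rewrite !ffunE; apply: eq_gate => k k_in.
by rewrite /sign_lit ffunE; case: eqP => // k_j; rewrite -k_j k_in in j_out.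
Qed.

Lemma gate_net_mono_pos x i j :
  (j, i, true) \in E -> x j = false ->
  gate_net x i -> gate_net (setc x j true) i.
Proof.
move=> pos xj; rewrite !ffunE; apply: gate_mono => k _.
by rewrite /sign_lit ffunE; case: eqP => [->|//]; rewrite pos xj.
Qed.

Lemma gate_net_mono_neg x i j :
  (j, i, true) \notin E -> x j = false ->
  gate_net (setc x j true) i -> gate_net x i.
Proof.
move=> /negbTE not_pos xj; rewrite !ffunE; apply: gate_mono => k _.
by rewrite /sign_lit ffunE; case: eqP => [->|//]; rewrite not_pos.
Qed.

Lemma edge_of_interaction_arc j i s : interaction_arc gate_net j i s -> (j, i, s) \in E.
Proof.
case=> x [xj arc]; have [j_in|j_out] := boolP (j \in in_nbs i); last first.
  by move: arc; rewrite gate_net_setc_out //; case: s => -[->].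
have [pos|not_pos] := boolP ((j, i, true) \in E).
  case: s arc => // -[fx /negbT/negP[]]; exact: gate_net_mono_pos fx.
have neg : (j, i, false) \in E.
  by move: j_in; rewrite inE => /existsP[[] pos] //; rewrite pos in not_pos.
case: s arc => // -[/negbT/negP fx fs]; case: fx; exact: gate_net_mono_neg fs.
Qed.

Definition lit_config i (l : V -> bool) : config V :=
  [ffun k => if (k, i, true) \in E then l k else ~~ l k].

Lemma sign_lit_config i l k : sign_lit i (lit_config i l) k = l k.
Proof. by rewrite /sign_lit ffunE; case: ifP => ->; rewrite ?negbK. Qed.

Lemma interaction_arc_of_edge j i s :
  simple_sd E -> #|in_nbs i| != 2 -> (j, i, s) \in E -> interaction_arc gate_net j i s.
Proof.
move=> simpleE nbs_neq2 arc.
have sign_j : ((j, i, true) \in E) = s.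
  by case: s arc => [->|neg] //; apply/negP => pos; apply: (simpleE j i).
have j_in : j \in in_nbs i by rewrite inE; apply/existsP; exists s.
have [l gate_l] := gate_essential j_in nbs_neq2.
pose x := lit_config i (fun k => if k == j then ~~ s else l k).
have fx : gate_net x i = ~~ s.
  by rewrite ffunE -[RHS]gate_l; apply: eq_gate => k _; rewrite sign_lit_config.
have fxj : gate_net (setc x j true) i = s.
  rewrite ffunE -[RHS]gate_l; apply: eq_gate => k _.
  rewrite /sign_lit !ffunE; case: eqP => [->|_]; first by rewrite sign_j; case: (s).
  by case: ifP => ->; rewrite ?negbK.
exists x; split; first by rewrite ffunE eqxx sign_j; case: (s).
by rewrite fx fxj; case: (s).
Qed.

End GateNetwork.

Theorem proposition1 (V : finType) (E : sdigraph V) :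
  0 < #|V| ->
  simple_sd E ->
  (forall i : V, indeg E i <> 0 /\ indeg E i <> 2) ->
  exists f : BN V, BN_on E f /\ ~ synchronizing f.
Proof.
move=> V_gt0 simpleE indegE.
have nbs_gt0 i : 0 < #|in_nbs E i| by case: (indegE i) => /eqP; rewrite lt0n.
have nbs_neq2 i : #|in_nbs E i| != 2 by case: (indegE i) => _ /eqP.
exists (gate_net E); split.
  move=> j i s; split; first exact: interaction_arc_of_edge.
  exact: edge_of_interaction_arc.
apply: selfdual_not_synchronizing V_gt0 _ => x.
exact: gate_net_selfdual.
Qed.
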